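(* In any falsifiable Outcome Logic instance, for every outcome assertion $\varphi$ containing no implications and all $m_1,m_2\in M\Sigma$ with $m_1\diamond m_2$ defined: if $m_1\diamond m_2\vDash\varphi$, then there exist outcome assertions $\varphi_1,\varphi_2$ with $m_1\vDash\varphi_1$, $m_2\vDash\varphi_2$, and $\varphi_1\oplus\varphi_2\Rightarrow\varphi$.
   Context: OL instance: execution model $\langle M,\mathsf{bind},\mathsf{unit},\diamond,\varnothing\rangle$ (monad on sets, with each $(MA,\diamond,\varnothing)$ a partial commutative monoid preserved by $\mathsf{bind}$), program states $\Sigma$, atomic commands $[\![c]\!]\colon\Sigma\to M\Sigma$, atomic assertions with relation $\vDash_{\mathsf{atom}}\subseteq M\Sigma\times\mathsf{Prop}$. Programs $C::=\mathbb{0}\mid\mathbb{1}\mid C_1;C_2\mid C_1+C_2\mid C^\star\mid c$ with the standard monadic semantics ($\mathbb{0}\mapsto\varnothing$, $\mathbb{1}\mapsto\mathsf{unit}$, sequencing by $\mathsf{bind}$, $+$ by $\diamond$, $C^\star$ as least fixed point of $f\mapsto\lambda\sigma.f^\dagger([\![C]\!](\sigma))\diamond\mathsf{unit}(\sigma)$), $[\![C]\!]^\dagger(m)=\mathsf{bind}(m,[\![C]\!])$. Outcome assertions: $\top,\bot,\top^\oplus$ (only $\varnothing$), classical $\land$ and $\Rightarrow$, atomic $P$, and $\oplus$ ($m\vDash\varphi\oplus\psi$ iff $m=m_1\diamond m_2$ with $m_1\vDash\varphi$, $m_2\vDash\psi$); $\lnot\varphi=\varphi\Rightarrow\bot$;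 ''no implications'' means $\Rightarrow$ (hence $\lnot$) does not occur. $\varphi\Rightarrow\psi$ as a proposition means every $m$ satisfying $\varphi$ satisfies $\psi$; $\vDash\langle\varphi\rangle C\langle\psi\rangle$ iff $m\vDash\varphi$ implies $[\![C]\!]^\dagger(m)\vDash\psi$. The instance is falsifiable if: (1a) $m_1\diamond m_2=\varnothing$ implies $m_1=m_2=\varnothing$; (1b) if $m_1\diamond m_2=n_1\diamond n_2$ then there exist $s_1,s_2,t_1,t_2$ with $s_1\diamond s_2=n_1$, $t_1\diamond t_2=n_2$, $s_1\diamond t_1=m_1$, $s_2\diamond t_2=m_2$; (2) for every atomic $P$, if $m_1\diamond m_2\vDash P$ then there are $\varphi_1,\varphi_2$ with $m_1\vDash\varphi_1$, $m_2\vDash\varphi_2$, $\varphi_1\oplus\varphi_2\Rightarrow P$; (3) for atomic $Q_1,\dots,Q_n$, $m\not\vDash Q_1\oplus\cdots\oplus Q_n$ iff there is an implication-free $\psi$ with $m\vDash\psi$ and $\psi\Rightarrow\lnot(Q_1\oplus\cdots\oplus Q_n)$; (4) for every atomic command $c$ and implication-free $\psi$, if $[\![c]\!]^\dagger(m)\vDash\psi$ then there is an implication-free $\varphi$ with $m\vDash\varphi$ and $\vDash\langle\varphi\rangle c\langle\psi\rangle$. *)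

From Stdlib Require Import List.
Set Implicit Arguments.

(* Partial composition is modelled as an option-valued operation:
   [pcm_op m1 m2 = Some m] means "m1 <> m2 is defined and equals m". *)
Definition obind {A B : Type} (o : option A) (f : A -> option B) : option B :=
  match o with Some a => f a | None => None end.

Record OLInstance := {
  M : Type -> Type;
  bind : forall {A B : Type}, M A -> (A -> M B) -> M B;
  unit : forall {A : Type}, A -> M A;
  pcm_op : forall {A : Type}, M A -> M A -> option (M A);
  pcm_zero : forall {A : Type}, M A;
  bind_unit_l : forall A B (a : A) (f : A -> M B), bind (unit a) f = f a;
  bind_unit_r : forall A (m : M A), bind m unit = m;
  bind_assoc : forall A B C (m : M A) (f : A -> M B) (g : B -> M C),
      bind (bind m f) g = bind m (fun x => bind (f x) g);
  pcm_comm : forall A (a b : M A), pcm_op a b = pcm_op b a;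
  pcm_assoc : forall A (a b c : M A),
      obind (pcm_op a b) (fun ab => pcm_op ab c)
      = obind (pcm_op b c) (fun bc => pcm_op a bc);
  pcm_unit : forall A (a : M A), pcm_op a pcm_zero = Some a;
  bind_op : forall A B (m1 m2 m : M A) (f : A -> M B),
      pcm_op m1 m2 = Some m -> pcm_op (bind m1 f) (bind m2 f) = Some (bind m f);
  bind_zero : forall A B (f : A -> M B), bind (@pcm_zero A) f = pcm_zero;
  State : Type;
  Cmd : Type;
  sem_cmd : Cmd -> State -> M State;
  Atom : Type;
  sat_atom : M State -> Atom -> Prop
}.

Arguments bind {_ _ _}.
Arguments unit {_ _}.
Arguments pcm_op {_ _}.
Arguments pcm_zero {_ _}.

Inductive assn (Atom : Type) : Type :=
| ATop | ABot | ATopPlus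
| AAnd (p q : assn Atom)
| AImp (p q : assn Atom)
| AAtom (P : Atom)
| AOplus (p q : assn Atom).

Arguments ATop {Atom}. Arguments ABot {Atom}. Arguments ATopPlus {Atom}.

Definition ANot {Atom} (p : assn Atom) : assn Atom := AImp p ABot.

Fixpoint sat (I : OLInstance) (m : M I (State I)) (p : assn (Atom I)) : Prop :=
  match p with
  | ATop => True
  | ABot => False
  | ATopPlus => m = pcm_zero
  | AAnd p q => sat I m p /\ sat I m q
  | AImp p q => sat I m p -> sat I m q
  | AAtom P => sat_atom I m P
  | AOplus p q => exists m1 m2, pcm_op m1 m2 = Some m /\ sat I m1 p /\ sat I m2 q
  end.

(* "phi => psi" as a proposition: semantic entailment *)
Definition entails (I : OLInstance) (p q : assn (Atom I)) : Prop :=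
  forall m, sat I m p -> sat I m q.

Fixpoint no_imp {Atom} (p : assn Atom) : Prop :=
  match p with
  | ATop | ABot | ATopPlus | AAtom _ => True
  | AAnd p q | AOplus p q => no_imp p /\ no_imp q
  | AImp _ _ => False
  end.

Definition lift_sem (I : OLInstance) (c : Cmd I) (m : M I (State I)) : M I (State I) :=
  bind m (sem_cmd I c).

Definition valid_triple (I : OLInstance) (p : assn (Atom I)) (c : Cmd I)
  (q : assn (Atom I)) : Prop :=
  forall m, sat I m p -> sat I (lift_sem I c m) q.

(* Q1 (+) ... (+) Qn, n >= 1, right-nested *)
Fixpoint oplus_atoms {Atom} (Q : Atom) (Qs : list Atom) : assn Atom :=
  match Qs with
  | nil => AAtom Q
  | Q' :: Qs' => AOplus (AAtom Q) (oplus_atoms Q' Qs')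
  end.

Record falsifiable (I : OLInstance) : Prop := {
  fals_1a : forall m1 m2 : M I (State I),
      pcm_op m1 m2 = Some pcm_zero -> m1 = pcm_zero /\ m2 = pcm_zero;
  fals_1b : forall m1 m2 n1 n2 m : M I (State I),
      pcm_op m1 m2 = Some m -> pcm_op n1 n2 = Some m ->
      exists s1 s2 t1 t2,
        pcm_op s1 s2 = Some n1 /\ pcm_op t1 t2 = Some n2 /\
        pcm_op s1 t1 = Some m1 /\ pcm_op s2 t2 = Some m2;
  fals_2 : forall (P : Atom I) (m1 m2 m : M I (State I)),
      pcm_op m1 m2 = Some m -> sat_atom I m P ->
      exists p1 p2, sat I m1 p1 /\ sat I m2 p2 /\ entails I (AOplus p1 p2) (AAtom P);
  fals_3 : forall (Q : Atom I) (Qs : list (Atom I)) (m : M I (State I)),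
      ~ sat I m (oplus_atoms Q Qs) <->
      exists psi, no_imp psi /\ sat I m psi /\ entails I psi (ANot (oplus_atoms Q Qs));
  fals_4 : forall (c : Cmd I) (psi : assn (Atom I)) (m : M I (State I)),
      no_imp psi -> sat I (lift_sem I c m) psi ->
      exists phi, no_imp phi /\ sat I m phi /\ valid_triple I phi c psi
}.

(* Atoms split by condition (2) and
   [⊤⊕] by condition (1a); conjunctions split componentwise. For [φ ⊕ ψ], condition
   (1b) refines the two decompositions [m1 ⋄ m2 = n1 ⋄ n2] into a common 2×2
   decomposition, the halves [n1], [n2] split by induction, and the split pieces are
   recombined using the interchange law of the commutative monoid. *)

Section PartialCommutativeMonoid.
Context {I : OLInstance} {A : Type}.
Notation op := (@pcm_op I A).

Lemma pcm_op_assocl {a b c ab r : M I A} :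
  op a b = Some ab -> op ab c = Some r ->
  exists bc, op b c = Some bc /\ op a bc = Some r.
Proof.
  intros Hab Hr. pose proof (pcm_assoc I A a b c) as E.
  rewrite Hab in E. simpl in E. rewrite Hr in E.
  destruct (op b c) as [bc|]; simpl in E; [eauto | discriminate].
Qed.

Lemma pcm_op_assocr {a b c bc r : M I A} :
  op b c = Some bc -> op a bc = Some r ->
  exists ab, op a b = Some ab /\ op ab c = Some r.
Proof.
  intros Hbc Hr. pose proof (pcm_assoc I A a b c) as E.
  rewrite Hbc in E. simpl in E. rewrite Hr in E.
  destruct (op a b) as [ab|]; simpl in E; [eauto | discriminate].
Qed.

Lemma pcm_op_interchange {a1 a2 b1 b2 a b r : M I A} :
  op a1 a2 = Some a -> op b1 b2 = Some b -> op a b = Some r ->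
  exists c d, op a1 b1 = Some c /\ op a2 b2 = Some d /\ op c d = Some r.
Proof.
  intros Ha Hb Hr.
  destruct (pcm_op_assocl Ha Hr) as [a2b [Ha2b Hr']].
  destruct (pcm_op_assocr Hb Ha2b) as [a2b1 [Ha2b1 Ha2b']].
  rewrite pcm_comm in Ha2b1.
  destruct (pcm_op_assocl Ha2b1 Ha2b') as [d [Hd Hb1d]].
  destruct (pcm_op_assocr Hb1d Hr') as [c [Hc Hcd]].
  eauto.
Qed.

End PartialCommutativeMonoid.

Section Decomposition.
Context {I : OLInstance}.
Notation op := (@pcm_op I (State I)).
Notation sat := (sat I).
Notation entails := (entails I).

Definition decomposable (phi : assn (Atom I)) : Prop :=
  forall m1 m2 m, op m1 m2 = Some m -> sat m phi ->
    exists phi1 phi2, sat m1 phi1 /\ sat m2 phi2 /\ entails (AOplus phi1 phi2) phi.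

Lemma entails_oplus_and (p p1 p2 q q1 q2 : assn (Atom I)) :
  entails (AOplus p1 p2) p -> entails (AOplus q1 q2) q ->
  entails (AOplus (AAnd p1 q1) (AAnd p2 q2)) (AAnd p q).
Proof.
  intros Hp Hq m [m1 [m2 [Hm [[S1p S1q] [S2p S2q]]]]].
  split; [apply Hp | apply Hq]; simpl; eauto.
Qed.

Lemma entails_oplus_interchange (p p1 p2 q q1 q2 : assn (Atom I)) :
  entails (AOplus p1 p2) p -> entails (AOplus q1 q2) q ->
  entails (AOplus (AOplus p1 q1) (AOplus p2 q2)) (AOplus p q).
Proof.
  intros Hp Hq m [a [b [Hab [[a1 [a2 [Ha [Sp1 Sq1]]]] [b1 [b2 [Hb [Sp2 Sq2]]]]]]]].
  destruct (pcm_op_interchange Ha Hb Hab) as [c [d [Hc [Hd Hcd]]]].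
  exists c, d. split; [exact Hcd | split; [apply Hp | apply Hq]]; simpl; eauto.
Qed.

Lemma decomposable_top : decomposable ATop.
Proof. intros m1 m2 m _ _. exists ATop, ATop. simpl. firstorder. Qed.

Lemma decomposable_and (p q : assn (Atom I)) :
  decomposable p -> decomposable q -> decomposable (AAnd p q).
Proof.
  intros Dp Dq m1 m2 m Hm [Sp Sq].
  destruct (Dp _ _ _ Hm Sp) as [p1 [p2 [S1p [S2p Ep]]]].
  destruct (Dq _ _ _ Hm Sq) as [q1 [q2 [S1q [S2q Eq]]]].
  exists (AAnd p1 q1), (AAnd p2 q2).
  split; [|split]; [split .. | apply entails_oplus_and]; assumption.
Qed.

Hypothesis HF : falsifiable I.

Lemma decomposable_topplus : decomposable ATopPlus.
Proof.
  intros m1 m2 m Hm Hzero. simpl in Hzero. subst m.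
  destruct (fals_1a HF _ _ Hm) as [-> ->].
  exists ATopPlus, ATopPlus. simpl. split; [|split]; auto.
  intros m [z1 [z2 [Hz [-> ->]]]]. rewrite pcm_unit in Hz. congruence.
Qed.

Lemma decomposable_atom (P : Atom I) : decomposable (AAtom P).
Proof. intros m1 m2 m. apply (fals_2 HF). Qed.

Lemma decomposable_oplus (p q : assn (Atom I)) :
  decomposable p -> decomposable q -> decomposable (AOplus p q).
Proof.
  intros Dp Dq m1 m2 m Hm [n1 [n2 [Hn [Sp Sq]]]].
  destruct (fals_1b HF _ _ _ _ Hm Hn) as [s1 [s2 [t1 [t2 [Hs [Ht [Hm1 Hm2]]]]]]].
  destruct (Dp _ _ _ Hs Sp) as [p1 [p2 [S1p [S2p Ep]]]].
  destruct (Dq _ _ _ Ht Sq) as [q1 [q2 [S1q [S2q Eq]]]].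
  exists (AOplus p1 q1), (AOplus p2 q2).
  split; [|split]; [simpl; eauto 6 .. | apply entails_oplus_interchange; assumption].
Qed.

Lemma no_imp_decomposable (phi : assn (Atom I)) : no_imp phi -> decomposable phi.
Proof.
  induction phi as [| | |p IHp q IHq|p _ q _|P|p IHp q IHq]; simpl.
  - intros _. apply decomposable_top.
  - intros _ m1 m2 m _ [].
  - intros _. apply decomposable_topplus.
  - intros [Np Nq]. apply decomposable_and; auto.
  - intros [].
  - intros _. apply decomposable_atom.
  - intros [Np Nq]. apply decomposable_oplus; auto.
Qed.

End Decomposition.

Theorem lemmaD3 (I : OLInstance) (HF : falsifiable I) (phi : assn (Atom I)) :
  no_imp phi ->
  forall m1 m2 m : M I (State I),
    pcm_op m1 m2 = Some m ->
    sat I m phi ->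
    exists phi1 phi2 : assn (Atom I),
      sat I m1 phi1 /\ sat I m2 phi2 /\ entails I (AOplus phi1 phi2) phi.
Proof.
  intros Hni. exact (no_imp_decomposable HF phi Hni).
Qed.
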